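(* Assume that $\wp(\phi):=\int_0^\phi g(s)\,ds\to\infty$ as $\phi\to\infty$. Then there is a constant $c$ depending only on the initial data and on $\kappa$ such that every solution satisfies $\|\phi\|_{L^\infty}\le c$.
   Context: $(M,\mathbf{g},\phi)$ is an asymptotically flat solution of the $2+1$ equivariant Einstein-wave map system ($\kappa>0$, target $d\rho^2+g(\rho)^2d\theta^2$, $g$ smooth odd with $g'(0)=1$, $\phi=\rho\circ\Phi\ge0$ with $\phi=0$ on the axis), written in coordinates $(t,r,\theta)$, $-1\le t<0$, with $\mathbf{g}=-e^{2\alpha}dt^2+e^{2\beta}dr^2+r^2d\theta^2$, $\alpha=\beta=0$ on the axis, and with conserved finite energy $E=2\pi\int_0^\infty\tfrac12(e^{-2\alpha}\phi_t^2+e^{-2\beta}\phi_r^2+g(\phi)^2/r^2)\,re^\beta dr$; $\beta$ is bounded above and below by constants depending only on the initial data. *)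

From Stdlib Require Import Reals Lra.
Open Scope R_scope.

Definition improper_int_0_inf (f : R -> R) (l : R) : Prop :=
  (forall X, 0 <= X -> inhabited (Riemann_integrable f 0 X)) /\
  (forall eps, 0 < eps -> exists M, forall X (pr : Riemann_integrable f 0 X),
       M <= X -> Rabs (RiemannInt pr - l) < eps).

(* Target warping function: g smooth (here: differentiable everywhere), odd,
   g'(0) = 1. *)
Definition admissible_g (g : R -> R) : Prop :=
  (forall x, exists l, derivable_pt_lim g x l) /\ (forall x, g (- x) = - g x) /\ derivable_pt_lim g 0 1.

Definition wp_to_infinity (g : R -> R) : Prop :=
  forall M, exists X, forall x (pr : Riemann_integrable g 0 x),
    X <= x -> M <= RiemannInt pr.

(* Energy density at time t (integrand of E / (2 pi)), with
   phit = d_t phi, phir = d_r phi. *)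
Definition energy_density (g : R -> R) (alpha beta phi phit phir : R -> R -> R)
  (t r : R) : R :=
  / 2 * (exp (-2 * alpha t r) * (phit t r) ^ 2
         + exp (-2 * beta t r) * (phir t r) ^ 2
         + (g (phi t r)) ^ 2 / r ^ 2) * r * exp (beta t r).

(* Properties of a solution (alpha, beta, phi) on -1 <= t < 0, r >= 0, as used
   in the context: phi = rho o Phi >= 0, phi = 0 and alpha = beta = 0 on the axis,
   phit/phir are the partial derivatives of phi, energy conserved and equal to E0
   (the energy of the initial data), and beta bounded by B (a constant depending
   only on the initial data). *)
Definition ewm_solution (g : R -> R) (E0 B : R)
  (alpha beta phi phit phir : R -> R -> R) : Prop :=
  (forall t r, -1 <= t < 0 -> 0 <= r -> 0 <= phi t r) /\
  (forall t, -1 <= t < 0 -> phi t 0 = 0 /\ alpha t 0 = 0 /\ beta t 0 = 0) /\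
  (forall t r, -1 <= t < 0 -> 0 <= r ->
     derivable_pt_lim (fun s => phi s r) t (phit t r)) /\
  (forall t r, -1 <= t < 0 -> 0 < r ->
     derivable_pt_lim (fun s => phi t s) r (phir t r)) /\
  (forall t r, -1 <= t < 0 -> 0 < r -> continuity_pt (fun s => phir t s) r) /\
  (forall t, -1 <= t < 0 -> continuity_pt (fun s => phi t s) 0) /\
  (forall t r, -1 <= t < 0 -> 0 <= r -> Rabs (beta t r) <= B) /\
  (forall t, -1 <= t < 0 ->
     improper_int_0_inf (energy_density g alpha beta phi phit phir t) (E0 / (2 * PI))).

(* The energy density dominates |phi_r g(phi)| pointwise (AM-GM, the factors
   e^beta and r cancelling), and phi_r g(phi) is the r-derivative of
   wp(phi(t, r)).  Since wp(phi(t, 0)) = wp(0) = 0, the fundamental theorem of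
   calculus gives |wp(phi(t, r))| <= E / (2 pi) for all t, r.  As wp -> +oo,
   phi stays below any level where wp exceeds E / (2 pi). *)

From Stdlib Require Import Reals Lra.
From Coquelicot Require Import Coquelicot.
Open Scope R_scope.

Lemma Rabs_mul_le_energy_integrand (a b pt pr gv s : R) : 0 < s ->
  Rabs (pr * gv) <=
  / 2 * (exp (-2 * a) * pt ^ 2 + exp (-2 * b) * pr ^ 2 + gv ^ 2 / s ^ 2) * s * exp b.
Proof.
  intros Hs.
  set (u := exp (- b)).
  assert (Hu : 0 < u) by apply exp_pos.
  assert (Eb2 : exp (-2 * b) = u * u) by (unfold u; rewrite <- exp_plus; f_equal; ring).
  assert (Eb : exp b = / u) by (unfold u; rewrite exp_Ropp, Rinv_inv; reflexivity).
  assert (Ha : 0 <= exp (-2 * a) * pt ^ 2)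
    by (apply Rmult_le_pos; [left; apply exp_pos | apply pow2_ge_0]).
  set (q := gv / s).
  assert (Egv : gv = q * s) by (unfold q; field; lra).
  assert (Egv2 : gv ^ 2 / s ^ 2 = q * q) by (rewrite Egv; field; lra).
  rewrite Eb2, Eb, Egv2, Egv.
  assert (AMGM : 2 * u * Rabs (pr * q) <= u * u * pr ^ 2 + q * q).
  { rewrite Rabs_mult.
    assert (0 <= (u * Rabs pr - Rabs q) ^ 2) by apply pow2_ge_0.
    assert (Rabs pr * Rabs pr = pr * pr) by (rewrite <- Rabs_mult; apply Rabs_right; nra).
    assert (Rabs q * Rabs q = q * q) by (rewrite <- Rabs_mult; apply Rabs_right; nra).
    nra. }
  replace (pr * (q * s)) with (pr * q * s) by ring.
  rewrite Rabs_mult, (Rabs_right s) by lra.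
  apply Rmult_le_reg_r with (2 * u); [lra|].
  replace (/ 2 * (exp (-2 * a) * pt ^ 2 + u * u * pr ^ 2 + q * q) * s * / u * (2 * u))
    with ((exp (-2 * a) * pt ^ 2 + u * u * pr ^ 2 + q * q) * s) by (field; lra).
  assert (0 <= Rabs (pr * q)) by apply Rabs_pos.
  nra.
Qed.

Lemma energy_density_ge0 g alpha beta phi phit phir t r : 0 < r ->
  0 <= energy_density g alpha beta phi phit phir t r.
Proof.
  intros Hr. eapply Rle_trans; [apply (Rabs_pos (phir t r * g (phi t r)))|].
  now apply Rabs_mul_le_energy_integrand.
Qed.

Lemma continuous_of_derivable_pt_lim (f : R -> R) x l :
  derivable_pt_lim f x l -> continuous f x.
Proof.
  intros H. exact (ex_derive_continuous f x (ex_intro _ l (proj2 (is_derive_Reals _ _ _) H))).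
Qed.

Lemma is_derive_RInt_0 (g : R -> R) : (forall x, continuous g x) ->
  forall x, is_derive (fun y => RInt g 0 y) x (g x).
Proof.
  intros Hg x. apply (is_derive_RInt g _ 0); [|apply Hg].
  exists (mkposreal 1 Rlt_0_1). intros y _.
  apply (@RInt_correct R_CompleteNormedModule), ex_RInt_continuous. intros; apply Hg.
Qed.

Lemma RInt_le_RInt_subinterval (f : R -> R) a b c d :
  c <= a <= b -> b <= d -> ex_RInt f c d -> (forall x, c < x < d -> 0 <= f x) ->
  RInt f a b <= RInt f c d.
Proof.
  intros Hab Hbd Hcd Hf.
  assert (Hcb : ex_RInt f c b) by (apply (ex_RInt_Chasles_1 f c b d); [lra | exact Hcd]).
  assert (Hbd' : ex_RInt f b d) by (apply (ex_RInt_Chasles_2 f c b d); [lra | exact Hcd]).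
  assert (Hca : ex_RInt f c a) by (apply (ex_RInt_Chasles_1 f c a b); [lra | exact Hcb]).
  assert (Hab' : ex_RInt f a b) by (apply (ex_RInt_Chasles_2 f c a b); [lra | exact Hcb]).
  rewrite <- (RInt_Chasles f c b d), <- (RInt_Chasles f c a b) by assumption.
  assert (0 <= RInt f c a) by (apply RInt_ge_0; [lra | exact Hca | intros; apply Hf; lra]).
  assert (0 <= RInt f b d) by (apply RInt_ge_0; [lra | exact Hbd' | intros; apply Hf; lra]).
  unfold plus; simpl; lra.
Qed.

Lemma RInt_le_improper_int_0_inf (f : R -> R) (l : R) :
  (forall x, 0 < x -> 0 <= f x) -> improper_int_0_inf f l ->
  forall a b, 0 <= a <= b -> ex_RInt f a b /\ RInt f a b <= l.
Proof.
  intros Hf [Hinteg Hlim] a b Hab.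
  assert (Hex : forall X, 0 <= X -> ex_RInt f 0 X).
  { intros X HX. destruct (Hinteg X HX) as [pr]. now apply ex_RInt_Reals_1. }
  split; [apply (ex_RInt_Chasles_2 f 0 a b); [lra | apply Hex; lra]|].
  apply Rle_plus_epsilon. intros eps Heps.
  destruct (Hlim eps Heps) as [M HM].
  set (X := Rmax M b).
  assert (HbX : b <= X) by apply Rmax_r.
  destruct (Hinteg X ltac:(lra)) as [pr].
  specialize (HM X pr (Rmax_l M b)).
  rewrite <- RInt_Reals in HM. apply Rabs_def2 in HM.
  assert (RInt f a b <= RInt f 0 X)
    by (apply RInt_le_RInt_subinterval; auto; [apply Hex; lra | intros; apply Hf; lra]).
  lra.
Qed.

(* The derivative of h is only controlled on (0, +oo); continuity of h at 0
   replaces integrability down to 0. *)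
Lemma Rabs_le_of_derive_dominated (h dh e : R -> R) (l : R) :
  continuity_pt h 0 -> h 0 = 0 ->
  (forall s, 0 < s -> is_derive h s (dh s)) ->
  (forall s, 0 < s -> continuous dh s) ->
  (forall s, 0 < s -> Rabs (dh s) <= e s) ->
  (forall a b, 0 < a <= b -> ex_RInt e a b /\ RInt e a b <= l) ->
  forall r, 0 <= r -> Rabs (h r) <= l.
Proof.
  intros Hc0 H0 Hd Hcd Hdom Hint r Hr.
  destruct (Req_dec r 0) as [->|Hr0].
  { rewrite H0, Rabs_R0. destruct (Hint 1 1 ltac:(lra)) as [_ Hl].
    now rewrite RInt_point in Hl. }
  apply Rle_plus_epsilon. intros delta Hdelta.
  destruct (Hc0 delta Hdelta) as [d [Hd0 Hnear]].
  set (eps := Rmin r (d / 2)).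
  assert (Heps : 0 < eps <= r) by (unfold eps; split; [apply Rmin_glb_lt | apply Rmin_l]; lra).
  assert (Hheps : Rabs (h eps) < delta).
  { replace (h eps) with (h eps - h 0) by (rewrite H0; ring). apply (Hnear eps). split.
    - split; [exact I | lra].
    - simpl; unfold R_dist. rewrite Rminus_0_r, Rabs_right by lra.
      unfold eps. pose proof (Rmin_r r (d / 2)). lra. }
  assert (Hftc : is_RInt dh eps r (minus (h r) (h eps))).
  { apply (@is_RInt_derive R_CompleteNormedModule);
      intros x Hx; rewrite Rmin_left, Rmax_right in Hx by lra; [apply Hd | apply Hcd]; lra. }
  assert (Hval : RInt dh eps r = h r - h eps) by now apply is_RInt_unique.
  assert (Hexabs : ex_RInt (fun s => Rabs (dh s)) eps r).
  { apply (@ex_RInt_continuous R_CompleteNormedModule). intros x Hx.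
    rewrite Rmin_left, Rmax_right in Hx by lra.
    apply (continuous_comp dh Rabs); [apply Hcd; lra | apply continuous_Rabs]. }
  destruct (Hint eps r Heps) as [Hexe Hle].
  assert (Rabs (RInt dh eps r) <= RInt (fun s => Rabs (dh s)) eps r)
    by (apply abs_RInt_le; [lra | eexists; exact Hftc]).
  assert (RInt (fun s => Rabs (dh s)) eps r <= RInt e eps r)
    by (apply RInt_le; auto; [lra | intros; apply Hdom; lra]).
  replace (h r) with (RInt dh eps r + h eps) by lra.
  eapply Rle_trans; [apply Rabs_triang | lra].
Qed.

Lemma Rabs_wp_le_energy (g : R -> R) (E0 B : R) alpha beta phi phit phir :
  (forall x, continuous g x) ->
  ewm_solution g E0 B alpha beta phi phit phir ->
  forall t r, -1 <= t < 0 -> 0 <= r ->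
  Rabs (RInt g 0 (phi t r)) <= E0 / (2 * PI).
Proof.
  intros Hg [_ [Hax [_ [Hdr [Hcr [Hc0 [_ Hint]]]]]]] t r Ht; revert r.
  destruct (Hax t Ht) as [Hphi0 _].
  apply (Rabs_le_of_derive_dominated (fun s => RInt g 0 (phi t s)) (fun s => phir t s * g (phi t s))
           (energy_density g alpha beta phi phit phir t)).
  - apply (continuity_pt_comp (fun s => phi t s) (fun y => RInt g 0 y)); [apply Hc0, Ht|].
    apply continuity_pt_filterlim.
    exact (ex_derive_continuous _ _ (ex_intro _ _ (is_derive_RInt_0 g Hg _))).
  - now rewrite Hphi0, RInt_point.
  - intros s Hs. apply (is_derive_comp (fun y => RInt g 0 y) (fun s => phi t s)).
    + now apply is_derive_RInt_0.
    + now apply is_derive_Reals, Hdr.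
  - intros s Hs. apply (continuous_mult (fun s => phir t s) (fun s => g (phi t s))).
    + now apply continuity_pt_filterlim, Hcr.
    + apply (continuous_comp (fun s => phi t s) g); [|apply Hg].
      now apply (continuous_of_derivable_pt_lim _ _ (phir t s)), Hdr.
  - intros s Hs. now apply Rabs_mul_le_energy_integrand.
  - intros a b Hab. apply RInt_le_improper_int_0_inf; [|apply Hint, Ht | lra].
    intros; now apply energy_density_ge0.
Qed.

Lemma wp_to_infinity_RInt (g : R -> R) :
  (forall x, continuous g x) -> wp_to_infinity g ->
  forall M, exists X, forall x, X <= x -> M <= RInt g 0 x.
Proof.
  intros Hg Hwp M. destruct (Hwp M) as [X HX]. exists X. intros x Hx.
  assert (Hex : ex_RInt g 0 x) by (apply (@ex_RInt_continuous R_CompleteNormedModule); auto).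
  rewrite (RInt_Reals _ _ _ (ex_RInt_Reals_0 _ _ _ Hex)). now apply HX.
Qed.

Theorem mainTheorem7 (kappa : R) (g : R -> R) :
  0 < kappa -> admissible_g g -> wp_to_infinity g ->
  forall E0 B : R, 0 <= E0 -> 0 <= B ->
  exists c : R, forall alpha beta phi phit phir : R -> R -> R,
    ewm_solution g E0 B alpha beta phi phit phir ->
    forall t r, -1 <= t < 0 -> 0 <= r -> Rabs (phi t r) <= c.
Proof.
  intros _ [Hdg _] Hwp E0 B _ _.
  assert (Hg : forall x, continuous g x).
  { intros x. destruct (Hdg x) as [l Hl]. exact (continuous_of_derivable_pt_lim g x l Hl). }
  destruct (wp_to_infinity_RInt g Hg Hwp (E0 / (2 * PI) + 1)) as [X HX].
  exists (Rabs X). intros alpha beta phi phit phir Hsol t r Ht Hr.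
  pose proof (Rabs_wp_le_energy g E0 B alpha beta phi phit phir Hg Hsol t r Ht Hr) as Hwpb.
  assert (Hphi : 0 <= phi t r) by (destruct Hsol as [Hnn _]; auto).
  assert (HphiX : phi t r < X).
  { apply Rnot_le_lt. intros HXphi. specialize (HX _ HXphi).
    pose proof (Rle_abs (RInt g 0 (phi t r))). lra. }
  rewrite Rabs_right by lra. pose proof (RRle_abs X). lra.
Qed.
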